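(* For every bipartite graph $G$ there is a bipartite graph $H$ such that $\mathrm{Ind}(H)$ is vertex-decomposable and the $h$-vector of $\mathrm{Ind}(H)$ (with trailing zeros removed) equals the face vector of $\mathrm{Ind}(G)$.
   Context: $\mathrm{Ind}(G)$ is the simplicial complex of independent sets of $G$. Face vector of a $(d-1)$-dimensional complex: $(f_{-1},\ldots,f_{d-1})$, $f_i$ = number of faces with $i+1$ elements; $h$-vector: $(h_0,\ldots,h_d)$, $h_j=\sum_{i=0}^{j}(-1)^{j-i}\binom{d-i}{j-i}f_{i-1}$. A pure complex $\Delta$ is vertex-decomposable if it is a simplex or has a vertex $v$ with $\mathrm{link}_\Delta v=\{\tau\in\Delta: v\notin\tau,\ \tau\cup\{v\}\in\Delta\}$ and $\mathrm{del}_\Delta v=\{\tau\in\Delta: v\notin\tau\}$ both pure and vertex-decomposable. *)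

From HB Require Import structures.
From mathcomp Require Import all_boot all_order all_algebra.
Set Implicit Arguments. Unset Strict Implicit. Unset Printing Implicit Defensive.
Import GRing.Theory Num.Theory.

Section Defs.
Variable T : finType.

Definition simple_graph (e : rel T) : Prop := irreflexive e /\ symmetric e.

Definition bipartite (e : rel T) : Prop :=
  exists c : T -> bool, forall x y, e x y -> c x != c y.

Definition independent (e : rel T) (A : {set T}) : bool :=
  [forall x in A, forall y in A, ~~ e x y].

Definition Ind (e : rel T) : {set {set T}} := [set A | independent e A].

(* d = (dimension + 1) = maximal size of a face. *)
Definition cdim (D : {set {set T}}) : nat := \max_(A in D) #|A|.

(* number of faces with exactly k elements, i.e. f_{k-1} *)
Definition nfaces (D : {set {set T}}) (k : nat) : nat :=
  #|[set A in D | #|A| == k]|.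

(* face vector (f_{-1}, ..., f_{d-1}) *)
Definition face_vector (D : {set {set T}}) : seq nat :=
  [seq nfaces D k | k <- iota 0 (cdim D).+1].

Definition h_vector (D : {set {set T}}) : seq int :=
  let d := cdim D in
  [seq (\sum_(i < j.+1)
          (-1) ^+ (j - i) * ('C(d - i, j - i))%:Z * (nfaces D i)%:Z)%R
   | j <- iota 0 d.+1].

Definition facet (D : {set {set T}}) (A : {set T}) : Prop :=
  A \in D /\ forall B, B \in D -> A \subset B -> B = A.

Definition pure (D : {set {set T}}) : Prop :=
  forall A B, facet D A -> facet D B -> #|A| = #|B|.

Definition link (D : {set {set T}}) (v : T) : {set {set T}} :=
  [set t in D | (v \notin t) && (v |: t \in D)].

Definition del (D : {set {set T}}) (v : T) : {set {set T}} :=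
  [set t in D | v \notin t].

Inductive vertex_decomposable : {set {set T}} -> Prop :=
| vd_simplex (S : {set T}) : vertex_decomposable (powerset S)
| vd_step (D : {set {set T}}) (v : T) :
    pure D -> [set v] \in D ->
    pure (link D v) -> pure (del D v) ->
    vertex_decomposable (link D v) -> vertex_decomposable (del D v) ->
    vertex_decomposable D.

End Defs.

Definition strip0 (s : seq int) : seq int :=
  rev (drop (find (fun x => x != 0%R) (rev s)) (rev s)).

(* Hang a leaf on every vertex of G.
   A face of Ind(H) is determined by its trace A, an independent set of G, and
   by a set of leaves hung at vertices outside A; hence
   f_{i-1}(Ind H) = sum_A C(n - |A|, i - |A|), and binomial inversion turns this
   into h_j(Ind H) = #{independent sets of G of size j}.  Ind(H) is
   vertex-decomposable by shedding the original vertices one at a time: deletion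
   and link keep every remaining original vertex together with its leaf, and such
   complexes are pure, since each facet takes one vertex from every
   vertex-leaf pair. *)

From mathcomp Require Import all_boot all_order all_algebra zify ring.
Set Implicit Arguments. Unset Strict Implicit. Unset Printing Implicit Defensive.
Import GRing.Theory.

Lemma mul_bin_sub a c i : i <= c <= a ->
  'C(a, c) * 'C(c, i) = 'C(a, i) * 'C(a - i, c - i).
Proof.
case/andP=> ic ca; have ia := leq_trans ic ca.
have hca := bin_fact ca; have hci := bin_fact ic; have hai := bin_fact ia.
have := bin_fact (leq_sub2r i ca); have -> : a - i - (c - i) = a - c by lia.
move=> haci; apply/eqP.
rewrite -(@eqn_pmul2r (i`! * (c - i)`! * (a - c)`!)) ?muln_gt0 ?fact_gt0 //.
apply/eqP; transitivity a`!.
  by rewrite -hca -hci; ring.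
by rewrite -hai -haci; ring.
Qed.

Local Open Scope ring_scope.

Lemma sum_alt_bin c :
  \sum_(i < c.+1) (-1) ^+ (c - i) * ('C(c, i))%:Z = (c == 0)%:Z.
Proof.
have := exprBn (-1 : int) (-1) c; rewrite subrr expr0n => E.
rewrite -natz E; apply: eq_bigr => i _.
by rewrite -[X in _ * X]natz mulr_natr mulrAC -mulrA signrMK.
Qed.

Lemma bin_inversion d k j : (k <= d)%N -> (j <= d)%N ->
  \sum_(i < j.+1)
     (-1) ^+ (j - i) * ('C(d - i, j - i))%:Z * ('C(d - k, i - k) * (k <= i))%:Z
  = (j == k)%:Z.
Proof.
move=> kd jd.
pose F i : int :=
  (-1) ^+ (j - i) * ('C(d - i, j - i))%:Z * ('C(d - k, i - k) * (k <= i))%:Z.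
rewrite -(big_mkord xpredT F).
have [jk | kj] := ltnP j k.
  rewrite (ltn_eqF jk) big1_seq // => i; rewrite mem_index_iota => /andP [_ ij].
  by rewrite /F leqNgt (leq_trans ij jk) muln0 mulr0.
rewrite (@big_cat_nat _ _ _ k) ?leqW //= big_nat_cond big1 ?add0r; last first.
  by move=> i /andP [/andP [_ ik] _]; rewrite /F leqNgt ik muln0 mulr0.
rewrite -{1}[k]add0n big_addn subSn // big_mkord.
set a := (d - k)%N; set c := (j - k)%N.
transitivity (\sum_(i < c.+1) ('C(a, c))%:Z * ((-1) ^+ (c - i) * ('C(c, i))%:Z)).
  apply: eq_bigr => i _; have ic : (i <= c)%N by rewrite -ltnS.
  rewrite /F; have -> : (j - (i + k) = c - i)%N by rewrite /c; lia.
  have -> : (d - (i + k) = a - i)%N by rewrite /a; lia.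
  have ica : (i <= c <= a)%N by rewrite ic leq_sub2r.
  rewrite addnK leq_addl muln1 -/a -mulrA -PoszM mulnC -mul_bin_sub //.
  by rewrite PoszM mulrCA.
have -> : (j == k) = (c == 0)%N by rewrite /c subn_eq0 eqn_leq kj andbT.
rewrite -mulr_sumr sum_alt_bin.
by case: eqP => [-> | _]; rewrite ?mulr0 // bin0 mulr1.
Qed.

Local Close Scope ring_scope.

Section Independence.
Variables (T : finType) (e : rel T).

Lemma independentP (A : {set T}) :
  reflect {in A &, forall x y, ~~ e x y} (independent e A).
Proof.
apply: (iffP forall_inP) => [H x y xA yA | H x xA].
  by move/forall_inP: (H x xA); apply.
by apply/forall_inP => y yA; apply: H.
Qed.

Lemma independentS (A B : {set T}) :
  A \subset B -> independent e B -> independent e A.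
Proof.
move=> AB /independentP IB; apply/independentP => x y xA yA.
by apply: IB; apply: (subsetP AB).
Qed.

Lemma independent_setU1 (A : {set T}) v :
  irreflexive e -> symmetric e -> independent e A ->
  {in A, forall x, ~~ e v x} -> independent e (v |: A).
Proof.
move=> e_irr e_sym /independentP IA vA; apply/independentP => x y.
rewrite !inE => /predU1P [-> | xA] /predU1P [-> | yA].
- by rewrite e_irr.
- exact: vA.
- by rewrite e_sym; apply: vA.
- exact: IA.
Qed.

End Independence.

Lemma strip0_cat_nseq0 (s : seq int) k : last 1%R s != 0%R -> strip0 (s ++ nseq k 0%R) = s.
Proof.
case/lastP: s => [|s x]; rewrite ?last_rcons => x0; rewrite /strip0.
  by rewrite cat0s rev_nseq find_nseq mul1n -{1}(size_nseq k (0%R : int)) drop_size.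
rewrite rev_cat rev_nseq find_cat has_nseq andbF size_nseq rev_rcons /= x0.
by rewrite addn0 drop_size_cat ?size_nseq // rev_cons revK.
Qed.

Section FaceCounts.
Variable T : finType.
Implicit Type D : {set {set T}}.

Lemma card_face_le_cdim D A : A \in D -> #|A| <= cdim D.
Proof. by move=> AD; apply: (leq_bigmax_cond (F := fun A : {set T} => #|A|)). Qed.

Lemma nfaces_eq0 D k : cdim D < k -> nfaces D k = 0.
Proof.
move=> Dk; apply/eqP; rewrite cards_eq0 -subset0; apply/subsetP => A.
by rewrite !inE => /andP [/card_face_le_cdim AD /eqP Ak]; move: Dk; rewrite -Ak ltnNge AD.
Qed.

Lemma nfaces_cdim_gt0 D : D != set0 -> 0 < nfaces D (cdim D).
Proof.
case/set0Pn => A0 A0D.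
have [|A AD cA] := @eq_bigmax_cond _ (mem D) (fun A : {set T} => #|A|).
  by apply/card_gt0P; exists A0.
by apply/card_gt0P; exists A; rewrite inE AD /cdim cA eqxx.
Qed.

Lemma strip0_nfaces D N : D != set0 -> cdim D <= N ->
  strip0 [seq Posz (nfaces D k) | k <- iota 0 N.+1] = map Posz (face_vector D).
Proof.
move=> D0 DN.
have last_face_vector : last 1%R [seq Posz (nfaces D k) | k <- iota 0 (cdim D).+1] != 0%R.
  by rewrite -addn1 iotaD map_cat add0n /= cats1 last_rcons eqz_nat -lt0n nfaces_cdim_gt0.
rewrite -(subnKC DN) -addSn iotaD map_cat add0n.
have /all_pred1P -> : all (pred1 0%R) [seq Posz (nfaces D k) | k <- iota (cdim D).+1 (N - cdim D)].
  apply/allP => z /mapP [k]; rewrite mem_iota => /andP [Dk _] ->.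
  by rewrite /= nfaces_eq0.
by rewrite size_map strip0_cat_nseq0 // -map_comp.
Qed.

Lemma cdim_le_card D : cdim D <= #|T|.
Proof. by apply/bigmax_leqP => A _; apply: max_card. Qed.

End FaceCounts.

(* [O] is the vertex set of the original graph and [p] exchanges each
   [x \in O] with the leaf hung at [x]. *)
Section WhiskeredGraph.
Variables (T : finType) (e : rel T) (O : {set T}) (p : T -> T).
Hypotheses (e_irr : irreflexive e) (e_sym : symmetric e) (pK : involutive p).
Hypothesis p_base : forall x, (p x \in O) = (x \notin O).
Hypothesis adj_p : forall x, x \in O -> forall y, e (p x) y = (y == x).
Implicit Types (S A B F : {set T}) (v x y z : T).

Lemma adj_leaf y : y \notin O -> forall z, e y z = (z == p y).
Proof. by move=> yO z; rewrite -{1}(pK y) adj_p // p_base. Qed.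

Lemma leaves_nonadj x y : x \notin O -> y \notin O -> ~~ e x y.
Proof.
by move=> xO yO; rewrite adj_leaf //; apply: contra yO => /eqP ->; rewrite p_base.
Qed.

Lemma independent_leaf F a :
  independent e F -> a \in F -> a \in O -> p a \notin F.
Proof.
move=> /independentP IF aF aO; apply/negP => paF.
by move: (IF _ _ paF aF); rewrite adj_p // eqxx.
Qed.

Definition leaf_of z := if z \in O then p z else z.

Lemma leaf_ofP z : leaf_of z \notin O.
Proof. by rewrite /leaf_of; case: ifP => zO; rewrite ?p_base zO. Qed.

Lemma leaf_of_inj F : independent e F -> {in F &, injective leaf_of}.
Proof.
move=> IF a b aF bF; rewrite /leaf_of.
case aO: (a \in O); case bO: (b \in O) => //.
- exact: inv_inj.
- by move=> E; move: (independent_leaf IF aF aO); rewrite E bF.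
- by move=> E; move: (independent_leaf IF bF bO); rewrite -E aF.
Qed.

Lemma card_independent F : independent e F -> #|F| <= #|~: O|.
Proof.
move=> IF; rewrite -(card_in_imset (leaf_of_inj IF)); apply: subset_leq_card.
by apply/subsetP => _ /imsetP [z _ ->]; rewrite inE leaf_ofP.
Qed.

Definition Ind_on S := [set A in Ind e | A \subset S].

Lemma mem_Ind_on S A : (A \in Ind_on S) = independent e A && (A \subset S).
Proof. by rewrite !inE. Qed.

Lemma del_Ind_on S v : del (Ind_on S) v = Ind_on (S :\ v).
Proof. by apply/setP => A; rewrite !inE subsetD1 andbA. Qed.

Definition nbhd v : {set T} := v |: [set y | e v y].

Lemma link_Ind_on S v : v \in S -> link (Ind_on S) v = Ind_on (S :\: nbhd v).
Proof.
move=> vS; apply/setP => A; rewrite inE !mem_Ind_on subsetD disjoints_subset.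
apply/idP/idP.
  case/and4P => /andP [IA AS] vA IvA _; rewrite IA AS; apply/subsetP => y yA.
  rewrite !inE negb_or; apply/andP; split; first by apply: contraNneq vA => <-.
  by move/independentP: IvA; apply; rewrite !inE ?eqxx ?yA ?orbT.
case/and3P => IA AS /subsetP dj.
have vA : v \notin A by apply/negP => /dj; rewrite !inE eqxx.
rewrite IA AS vA subUset sub1set vS AS /= andbT; apply: independent_setU1 => // y yA.
by apply/negP => evy; move: (dj y yA); rewrite !inE evy orbT.
Qed.

Definition keeps_leaves S := {in S, forall x, x \in O -> p x \in S}.

Lemma keeps_leaves_del S v : keeps_leaves S -> v \in O -> keeps_leaves (S :\ v).
Proof.
move=> HS vO x; rewrite !inE => /andP [xv xS] xO; rewrite HS // andbT.
by apply: contraTneq vO => <-; rewrite p_base xO.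
Qed.

Lemma keeps_leaves_link S v : keeps_leaves S -> v \in O -> keeps_leaves (S :\: nbhd v).
Proof.
move=> HS vO x; rewrite !inE negb_or => /andP [/andP [xv _] xS] xO.
rewrite HS // andbT negb_or e_sym adj_p // andbC eq_sym xv /=.
by apply: contraTneq vO => <-; rewrite p_base xO.
Qed.

(* Every facet picks exactly one vertex from each pair [{x, p x}] inside [S]. *)
Lemma facet_Ind_on S F : keeps_leaves S -> facet (Ind_on S) F -> leaf_of @: F = S :\: O.
Proof.
move=> HS [FS Fmax]; move: (FS); rewrite mem_Ind_on => /andP [IF sFS].
apply/setP => y; apply/imsetP/idP => [[z zF ->] | ].
  rewrite inE leaf_ofP /leaf_of; have zS := subsetP sFS z zF.
  by case: ifP => // zO; apply: HS.
rewrite !inE => /andP [yO yS].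
case yF: (y \in F); first by exists y => //; rewrite /leaf_of (negbTE yO).
case pyF: (p y \in F); first by exists (p y); rewrite // /leaf_of p_base yO pK.
have yFS : y |: F \in Ind_on S.
  rewrite mem_Ind_on subUset sub1set yS sFS !andbT.
  apply: independent_setU1 => // z zF; rewrite adj_leaf //.
  by apply: contraFN pyF => /eqP <-.
by move: yF; rewrite -(Fmax _ yFS (subsetUr _ _)) setU11.
Qed.

Lemma pure_Ind_on S : keeps_leaves S -> pure (Ind_on S).
Proof.
move=> HS A B fA fB; have [[AS _] [BS _]] := (fA, fB).
rewrite !mem_Ind_on in AS BS; case/andP: AS => IA _; case/andP: BS => IB _.
rewrite -(card_in_imset (leaf_of_inj IA)) -(card_in_imset (leaf_of_inj IB)).
by rewrite (facet_Ind_on HS fA) (facet_Ind_on HS fB).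
Qed.

Lemma Ind_on_leaves S : [disjoint S & O] -> Ind_on S = powerset S.
Proof.
move=> SO; apply/setP => A; rewrite mem_Ind_on inE andb_idl // => /subsetP AS.
apply/independentP => x y xA yA.
by apply: leaves_nonadj; rewrite (disjointFr SO) ?AS.
Qed.

Lemma vertex_decomposable_Ind_on S : keeps_leaves S -> vertex_decomposable (Ind_on S).
Proof.
have [k] := ubnP #|S :&: O|; elim: k S => // k IH S; rewrite ltnS => SOk HS.
have [SO | [v]] := set_0Vmem (S :&: O).
  by rewrite Ind_on_leaves -?setI_eq0 ?SO //; apply: vd_simplex.
rewrite inE => /andP [vS vO].
have SOdel : #|(S :\ v) :&: O| < k.
  apply: leq_trans SOk; apply: proper_card; apply/properP; split.
    by apply/setSI/subD1set.
  by exists v; rewrite !inE ?eqxx ?vS ?vO.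
have SOlink : #|(S :\: nbhd v) :&: O| < k.
  apply: leq_ltn_trans SOdel; apply/subset_leq_card/setSI/subsetP => x.
  by rewrite !inE negb_or => /andP [/andP [-> _] ->].
have HSdel := keeps_leaves_del HS vO; have HSlink := keeps_leaves_link HS vO.
apply: (vd_step (v := v)) (pure_Ind_on HS) _ _ _ _ _.
- rewrite mem_Ind_on sub1set vS andbT; apply/independentP => x y.
  by rewrite !inE => /eqP -> /eqP ->; rewrite e_irr.
- by rewrite link_Ind_on //; apply: pure_Ind_on.
- by rewrite del_Ind_on; apply: pure_Ind_on.
- by rewrite link_Ind_on //; apply: IH.
- by rewrite del_Ind_on; apply: IH.
Qed.

Lemma vertex_decomposable_Ind : vertex_decomposable (Ind e).
Proof.
have -> : Ind e = Ind_on setT by apply/setP => A; rewrite mem_Ind_on subsetT andbT inE.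
by apply: vertex_decomposable_Ind_on => x _ _; apply: in_setT.
Qed.

Lemma cdim_Ind : cdim (Ind e) = #|~: O|.
Proof.
apply/eqP; rewrite eqn_leq; apply/andP; split.
  by apply/bigmax_leqP => A; rewrite inE; apply: card_independent.
apply: (leq_bigmax_cond (F := fun A : {set T} => #|A|)); rewrite inE.
by apply/independentP => x y; rewrite !inE; apply: leaves_nonadj.
Qed.

Definition base_faces := [set A in Ind e | A \subset O].

Definition free_leaves A := ~: O :\: p @: A.

Lemma card_free_leaves A : A \subset O -> #|free_leaves A| = #|~: O| - #|A|.
Proof.
move=> AO; rewrite cardsD (setIidPr _) ?card_imset //; first exact: inv_inj.
by apply/subsetP => _ /imsetP [a aA ->]; rewrite inE p_base negbK (subsetP AO).
Qed.

Lemma free_leaves_trace F : independent e F -> F :\: O \subset free_leaves (F :&: O).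
Proof.
move=> IF; apply/subsetP => y; rewrite !inE => /andP [yO yF]; rewrite yO andbT.
apply/imsetP => -[a]; rewrite inE => /andP [aF aO] ya.
by move: (independent_leaf IF aF aO); rewrite -ya yF.
Qed.

Lemma independent_extension A B : A \in base_faces -> B \subset free_leaves A ->
  independent e (A :|: B) /\ (A :|: B) :&: O = A.
Proof.
rewrite !inE => /andP [IA AO] /subsetP BW.
have BO y : y \in B -> y \notin O by move/BW; rewrite !inE => /andP [_ ->].
split; last first.
  rewrite setIUl (setIidPl AO) -[RHS]setU0; congr (_ :|: _).
  by apply/setP => y; rewrite !inE; case yB: (y \in B); rewrite ?(negbTE (BO y yB)).
have AB a b : a \in A -> b \in B -> ~~ e a b.
  move=> aA bB; rewrite e_sym adj_leaf ?BO //; apply: contraTN (BW b bB) => /eqP ab.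
  by rewrite !inE -[b]pK -ab (imset_f p aA).
apply/independentP => x y; rewrite !inE => /orP [xA | xB] /orP [yA | yB].
- by move/independentP: IA; apply.
- exact: AB.
- by rewrite e_sym; apply: AB.
- by apply: leaves_nonadj; apply: BO.
Qed.

(* A face with trace [A] on [O] is [A] plus any set of leaves not hung at [A]. *)
Lemma card_faces_trace A i : A \in base_faces ->
  #|[set F in Ind e | (#|F| == i) && (F :&: O == A)]|
  = 'C(#|~: O| - #|A|, i - #|A|) * (#|A| <= i).
Proof.
move=> Abase; have AO : A \subset O by move: Abase; rewrite inE => /andP [].
have [iA | Ai] := ltnP i #|A|.
  rewrite muln0; apply/eqP; rewrite cards_eq0 -subset0; apply/subsetP => F.
  rewrite !inE => /and3P [_ /eqP Fi /eqP FA]; move: iA.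
  by rewrite -Fi -FA ltnNge subset_leq_card ?subsetIl.
rewrite muln1 -card_free_leaves // -cards_draws.
have leaf_part B : B \subset free_leaves A -> (A :|: B) :\: O = B.
  move=> /subsetP BW; apply/setP => y; rewrite !inE.
  case yB: (y \in B); first by have := BW y yB; rewrite !inE orbT andbT => /andP [].
  by rewrite orbF; case yA: (y \in A); rewrite ?andbF // (subsetP AO y yA).
rewrite -(card_in_imset (f := fun B => A :|: B)); last first.
  move=> B1 B2; rewrite !inE => /andP [/leaf_part E1 _] /andP [/leaf_part E2 _] E.
  by rewrite -E1 -E2 E.
apply: eq_card => F; rewrite !inE; apply/and3P/imsetP.
  case=> IF /eqP Fi /eqP FA; exists (F :\: O); last by rewrite -FA setID.
  by rewrite inE -FA free_leaves_trace //= -Fi -(cardsID O F) addKn.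
case=> B; rewrite inE => /andP [BW /eqP cB] ->.
have [IAB AB_O] := independent_extension Abase BW.
split=> //; last by rewrite AB_O.
by rewrite -(cardsID O) AB_O leaf_part // cB subnKC.
Qed.

Lemma nfaces_Ind i :
  nfaces (Ind e) i = \sum_(A in base_faces) 'C(#|~: O| - #|A|, i - #|A|) * (#|A| <= i).
Proof.
rewrite /nfaces -sum1_card (partition_big (fun F => F :&: O) (mem base_faces)).
  apply: eq_bigr => A Abase; rewrite -card_faces_trace // -sum1_card.
  by apply: eq_bigl => F; rewrite !inE andbA.
move=> F; rewrite !inE => /andP [IF _]; rewrite subsetIr andbT.
exact: independentS (subsetIl _ _) IF.
Qed.

Lemma h_vector_Ind :
  h_vector (Ind e) = [seq Posz #|[set A in base_faces | #|A| == j]| | j <- iota 0 #|~: O|.+1].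
Proof.
rewrite /h_vector cdim_Ind; apply/eq_in_map => j; rewrite mem_iota add0n ltnS => /andP [_ jd].
transitivity (\sum_(i < j.+1) \sum_(A in base_faces) ((-1) ^+ (j - i)
    * ('C(#|~: O| - i, j - i))%:Z * ('C(#|~: O| - #|A|, i - #|A|) * (#|A| <= i))%:Z))%R.
  by apply: eq_bigr => i _; rewrite nfaces_Ind (big_morph Posz PoszD (erefl _)) mulr_sumr.
rewrite exchange_big /= -[#|[set _ in base_faces | _]|]sum1_card (big_morph Posz PoszD (erefl _)).
rewrite big_mkcond [RHS]big_mkcond /=.
apply: eq_bigr => A _; rewrite !inE; case: (boolP (_ && _)) => // /andP [IA _].
by rewrite bin_inversion ?card_independent // eq_sym; case: (_ == _).
Qed.

End WhiskeredGraph.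

Section Whiskering.
Variables (n : nat) (G : rel 'I_n).

(* [lshift n a] is the vertex [a] of [G] and [rshift n a] the leaf hung at [a]. *)
Definition whisker : rel 'I_(n + n) := fun x y =>
  match split x, split y with
  | inl a, inl b => G a b
  | inl a, inr b | inr a, inl b => a == b
  | inr _, inr _ => false
  end.

Definition partner (x : 'I_(n + n)) : 'I_(n + n) :=
  match split x with inl a => rshift n a | inr a => lshift n a end.

Definition base : {set 'I_(n + n)} := [set lshift n a | a in 'I_n].

Lemma split_lshift (a : 'I_n) : split (lshift n a) = inl a :> 'I_n + 'I_n.
Proof. exact: (unsplitK (inl a)). Qed.

Lemma split_rshift (a : 'I_n) : split (rshift n a) = inr a :> 'I_n + 'I_n.
Proof. exact: (unsplitK (inr a)). Qed.

Definition split_shift := (split_lshift, split_rshift).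

Lemma shift_ind (P : 'I_(n + n) -> Prop) :
  (forall a, P (lshift n a)) -> (forall a, P (rshift n a)) -> forall x, P x.
Proof. by move=> Pl Pr x; rewrite -(splitK x); case: (split x). Qed.

Lemma lshift_base (a : 'I_n) : lshift n a \in base. Proof. exact: imset_f. Qed.

Lemma rshift_base (a : 'I_n) : (rshift n a \in base) = false.
Proof. by apply/negbTE/imsetP => -[b _ /eqP]; rewrite eq_rlshift. Qed.

Lemma whisker_irr : irreflexive G -> irreflexive whisker.
Proof. by move=> G_irr; apply: shift_ind => a; rewrite /whisker ?split_shift. Qed.

Lemma whisker_sym : symmetric G -> symmetric whisker.
Proof.
move=> G_sym x y; elim/shift_ind: x => a; elim/shift_ind: y => b;
  by rewrite /whisker ?split_shift // eq_sym.
Qed.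

Lemma whisker_bipartite : bipartite G -> bipartite whisker.
Proof.
case=> c Gc; exists (fun x => match split x with inl a => c a | inr a => ~~ c a end).
move=> x y; elim/shift_ind: x => a; elim/shift_ind: y => b;
    rewrite /whisker ?split_shift //;
  by [exact: Gc | move=> /eqP->; case: (c b)].
Qed.

Lemma partnerK : involutive partner.
Proof. by move=> x; elim/shift_ind: x => a; rewrite /partner ?split_shift. Qed.

Lemma partner_base (x : 'I_(n + n)) : (partner x \in base) = (x \notin base).
Proof.
by elim/shift_ind: x => a; rewrite /partner ?split_shift ?lshift_base ?rshift_base.
Qed.

Lemma adj_partner (x : 'I_(n + n)) : x \in base -> forall y, whisker (partner x) y = (y == x).
Proof.
elim/shift_ind: x => a; rewrite ?rshift_base // => _ y; elim/shift_ind: y => b;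
  by rewrite /partner /whisker ?split_shift ?eq_shift // eq_sym.
Qed.

Lemma card_leaves : #|~: base| = n.
Proof.
have -> : ~: base = [set rshift n a | a in 'I_n].
  apply/setP; apply: shift_ind => a; rewrite inE ?lshift_base ?rshift_base /=.
    by apply/esym/negbTE/imsetP => -[b _ /eqP]; rewrite eq_lrshift.
  by rewrite imset_f.
by rewrite card_imset ?card_ord //; apply: rshift_inj.
Qed.

Lemma independent_whisker_lshift (B : {set 'I_n}) :
  independent whisker (lshift n @: B) = independent G B.
Proof.
apply/independentP/independentP => [IB a b aB bB | IB _ _ /imsetP [a aB ->] /imsetP [b bB ->]].
  by move: (IB _ _ (imset_f _ aB) (imset_f _ bB)); rewrite /whisker !split_shift.
by rewrite /whisker !split_shift; apply: IB.
Qed.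

Lemma base_faces_whisker :
  base_faces whisker base = [set lshift n @: B | B : {set 'I_n} in Ind G].
Proof.
apply/setP => A; rewrite !inE; apply/andP/imsetP => [[IA /subsetP Abase] | [B IB ->]].
  have EA : A = lshift n @: (lshift n @^-1: A).
    apply/setP => x; apply/idP/imsetP => [xA | [a]]; last by rewrite inE => aA ->.
    by have /imsetP [a _ xa] := Abase x xA; exists a; rewrite // inE -xa.
  by exists (lshift n @^-1: A); rewrite // inE -independent_whisker_lshift -EA.
rewrite independent_whisker_lshift; split; first by rewrite inE in IB.
by apply/subsetP => _ /imsetP [a _ ->]; apply: lshift_base.
Qed.

Lemma card_base_faces_whisker j :
  #|[set A in base_faces whisker base | #|A| == j]| = nfaces (Ind G) j.
Proof.
have card_lshift (B : {set 'I_n}) : #|lshift n @: B| = #|B|.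
  exact/card_imset/lshift_inj.
rewrite base_faces_whisker /nfaces -(card_imset _ (imset_inj (@lshift_inj n n))).
apply: eq_card => A; rewrite inE; apply/andP/imsetP => [[/imsetP [B IB ->]] | [B]].
  by rewrite card_lshift => cB; exists B; rewrite // inE IB.
by rewrite inE => /andP [IB cB] ->; rewrite card_lshift cB (imset_f _ IB).
Qed.

End Whiskering.

Theorem corollary4p15 (n : nat) (G : rel 'I_n) :
  simple_graph G -> bipartite G ->
  exists (m : nat) (H : rel 'I_m),
    [/\ simple_graph H, bipartite H,
        vertex_decomposable (Ind H) &
        strip0 (h_vector (Ind H)) = map Posz (face_vector (Ind G))].
Proof.
move=> [G_irr G_sym] G_bip.
have W_irr := whisker_irr G_irr; have W_sym := whisker_sym G_sym.
exists (n + n), (whisker G); split=> //.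
- exact: whisker_bipartite.
- exact: vertex_decomposable_Ind W_irr W_sym (@partnerK n) (@partner_base n) (@adj_partner n G).
rewrite (h_vector_Ind W_sym (@partnerK n) (@partner_base n) (@adj_partner n G)) card_leaves.
rewrite (eq_map (fun j => congr1 Posz (card_base_faces_whisker G j))).
apply: strip0_nfaces; last by have := cdim_le_card (Ind G); rewrite card_ord.
by apply/set0Pn; exists set0; rewrite inE; apply/independentP => x; rewrite inE.
Qed.
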